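(* Let $n=2$, $m=1$, $v_1(x)=x$ and $v_2(x)=2x$. Then for every $\rho<0$ there is no pricing rule $p:\mathbb{R}_{\ge0}\to\mathbb{R}$ and allocation $\mathbf{x}\in\Psi(\rho)$ such that $(\mathbf{x},p)$ is a Walrasian equilibrium.
   Context: Single good of supply 1; an allocation is $(x_1,x_2)\in\mathbb{R}^2_{\ge0}$ with $x_1+x_2\le1$. For $\rho<0$, $\Psi(\rho)$ is the set of allocations maximizing the CES welfare $(v_1(x_1)^\rho+v_2(x_2)^\rho)^{1/\rho}$. Quasilinear demand set $D_i(p)=\arg\max_{y\ge0}(v_i(y)-p(y))$. $(\mathbf{x},p)$ is a Walrasian equilibrium if $x_i\in D_i(p)$ for $i=1,2$, $x_1+x_2\le1$, and $x_1+x_2=1$ if the good has nonzero cost (some $y$ has $p(y)>0$). *)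

From Stdlib Require Import Reals.
Open Scope R_scope.

Definition feasible (x1 x2 : R) : Prop := 0 <= x1 /\ 0 <= x2 /\ x1 + x2 <= 1.

(* CES welfare (a^rho + b^rho)^(1/rho) for rho < 0, extended by continuity
   (value 0) when some agent's value is 0 (where a^rho is undefined/+oo). *)
Definition ces (rho a b : R) : R :=
  if Rle_dec a 0 then 0
  else if Rle_dec b 0 then 0
  else Rpower (Rpower a rho + Rpower b rho) (/ rho).

Definition in_Psi (v1 v2 : R -> R) (rho x1 x2 : R) : Prop :=
  feasible x1 x2 /\
  forall y1 y2, feasible y1 y2 -> ces rho (v1 y1) (v2 y2) <= ces rho (v1 x1) (v2 x2).

(* Quasilinear demand: x in argmax_{y >= 0} (v y - p y).
   The pricing rule p is only evaluated on R_{>=0}. *)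
Definition in_demand (v p : R -> R) (x : R) : Prop :=
  0 <= x /\ forall y, 0 <= y -> v y - p y <= v x - p x.

Definition walrasian (v1 v2 p : R -> R) (x1 x2 : R) : Prop :=
  in_demand v1 p x1 /\ in_demand v2 p x2 /\ x1 + x2 <= 1 /\
  ((exists y, 0 <= y /\ p y > 0) -> x1 + x2 = 1).

From Stdlib Require Import Reals.
From Stdlib Require Import Lra.
Open Scope R_scope.

(* Equilibrium side: by revealed preference, demands x1 in D1(p), x2 in D2(p)
   satisfy v1(x2) - v1(x1) <= p(x2) - p(x1) <= v2(x2) - v2(x1); for these
   valuations this forces x1 <= x2 (the agent with the steeper valuation
   demands at least as much).

   Welfare side: a CES optimum gives both agents positive value.  If
   0 < x1 <= x2 and agent 2's valuation is c*x with c > 1, then shifting a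
   small amount h of the good from agent 2 to agent 1 strictly decreases
   x1^rho + (c x2)^rho: its derivative in h at 0 is
   rho (x1^(rho-1) - c^rho x2^(rho-1)) < 0.  Since t |-> t^(1/rho) is
   decreasing, the shift strictly raises CES welfare, so such an allocation
   is never in Psi(rho). *)

Lemma Rpower_pos (a r : R) : 0 < Rpower a r.
Proof. unfold Rpower; apply exp_pos. Qed.

Lemma Rpower_lt_neg_exp (a b r : R) :
  0 < a -> a < b -> r < 0 -> Rpower b r < Rpower a r.
Proof.
  intros Ha Hab Hr; unfold Rpower; apply exp_increasing.
  assert (ln a < ln b) by (apply ln_increasing; lra).
  apply Rmult_lt_gt_compat_neg_l; lra.
Qed.

Lemma Rpower_le_neg_exp (a b r : R) :
  0 < a -> a <= b -> r < 0 -> Rpower b r <= Rpower a r.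
Proof.
  intros Ha Hab Hr; destruct (Rle_lt_or_eq_dec _ _ Hab) as [Hlt | ->].
  - left; apply Rpower_lt_neg_exp; assumption.
  - right; reflexivity.
Qed.

Lemma Rpower_lt_1_neg_exp (c r : R) : 1 < c -> r < 0 -> Rpower c r < 1.
Proof.
  intros Hc Hr; rewrite <- (Rpower_O c) by lra; apply Rpower_lt; assumption.
Qed.

Lemma ces_pos_eq (rho a b : R) : 0 < a -> 0 < b ->
  ces rho a b = Rpower (Rpower a rho + Rpower b rho) (/ rho).
Proof.
  intros Ha Hb; unfold ces.
  destruct (Rle_dec a 0); [lra |]; destruct (Rle_dec b 0); [lra |].
  reflexivity.
Qed.

Lemma ces_nonpos_value (rho a b : R) : a <= 0 \/ b <= 0 -> ces rho a b = 0.
Proof.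
  intros Hab; unfold ces.
  destruct (Rle_dec a 0); [reflexivity |]; destruct (Rle_dec b 0); [reflexivity |].
  lra.
Qed.

Lemma ces_pos (rho a b : R) : 0 < a -> 0 < b -> 0 < ces rho a b.
Proof. intros Ha Hb; rewrite ces_pos_eq by assumption; apply Rpower_pos. Qed.

Lemma ces_lt_of_power_sum (rho a b c d : R) :
  rho < 0 -> 0 < a -> 0 < b -> 0 < c -> 0 < d ->
  Rpower c rho + Rpower d rho < Rpower a rho + Rpower b rho ->
  ces rho a b < ces rho c d.
Proof.
  intros Hr Ha Hb Hc Hd Hsum; rewrite !ces_pos_eq by assumption.
  apply Rpower_lt_neg_exp; [| assumption | apply Rinv_lt_0_compat; assumption].
  pose proof (Rpower_pos c rho); pose proof (Rpower_pos d rho); lra.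
Qed.

Lemma demand_revealed_preference (v1 v2 p : R -> R) (x1 x2 : R) :
  in_demand v1 p x1 -> in_demand v2 p x2 ->
  v1 x2 - v1 x1 <= v2 x2 - v2 x1.
Proof.
  intros [Hx1 D1] [Hx2 D2].
  pose proof (D1 x2 Hx2); pose proof (D2 x1 Hx1); lra.
Qed.

Lemma in_Psi_positive_values (v1 v2 : R -> R) (rho x1 x2 y1 y2 : R) :
  feasible y1 y2 -> 0 < v1 y1 -> 0 < v2 y2 ->
  in_Psi v1 v2 rho x1 x2 -> 0 < v1 x1 /\ 0 < v2 x2.
Proof.
  intros Hy Hv1 Hv2 [_ Hopt].
  pose proof (Hopt y1 y2 Hy) as Hle; pose proof (ces_pos rho _ _ Hv1 Hv2).
  destruct (Rle_dec (v1 x1) 0) as [H1 | H1].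
  { rewrite (ces_nonpos_value rho (v1 x1) (v2 x2)) in Hle by (left; exact H1); lra. }
  destruct (Rle_dec (v2 x2) 0) as [H2 | H2].
  { rewrite (ces_nonpos_value rho (v1 x1) (v2 x2)) in Hle by (right; exact H2); lra. }
  split; lra.
Qed.

Lemma descent_right (f : R -> R) (t l eps : R) :
  derivable_pt_lim f t l -> l < 0 -> 0 < eps ->
  exists h, 0 < h <= eps /\ f (t + h) < f t.
Proof.
  intros Hd Hl Heps.
  destruct (Hd (- l / 2)) as [delta Hdelta]; [lra |].
  pose proof (cond_pos delta) as Hdelta_pos.
  set (h := Rmin (delta / 2) eps).
  assert (Hh_pos : 0 < h) by (apply Rmin_glb_lt; lra).
  assert (Hh_eps : h <= eps) by apply Rmin_r.
  assert (Hh_delta : h <= delta / 2) by apply Rmin_l.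
  pose proof (Hdelta h ltac:(lra) ltac:(rewrite Rabs_right; lra)) as Hq.
  apply Rabs_def2 in Hq; destruct Hq as [Hq _].
  assert (Hslope : (f (t + h) - f t) / h < 0) by lra.
  exists h; split; [lra |].
  assert (Hdiff : f (t + h) - f t < 0).
  { replace (f (t + h) - f t) with ((f (t + h) - f t) / h * h) by (field; lra).
    apply Rmult_neg_pos; lra. }
  lra.
Qed.

Lemma derivable_pt_lim_Rpower_affine (a b r t : R) : 0 < a + b * t ->
  derivable_pt_lim (fun s => Rpower (a + b * s) r) t
    (r * Rpower (a + b * t) (r - 1) * b).
Proof.
  intros Hpos.
  apply (derivable_pt_lim_comp (fun s => a + b * s) (fun u => Rpower u r)).
  - assert (Hlin : derivable_pt_lim (fun s => a + b * s) t (0 + b * 1)).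
    { apply (derivable_pt_lim_plus (fun _ => a) (fun s => b * s));
        [apply derivable_pt_lim_const
        | apply (derivable_pt_lim_scal id), derivable_pt_lim_id]. }
    replace (0 + b * 1) with b in Hlin by ring; exact Hlin.
  - apply derivable_pt_lim_power; exact Hpos.
Qed.

Lemma transfer_improves_welfare (rho c x1 x2 : R) :
  rho < 0 -> 1 < c -> feasible x1 x2 -> 0 < x1 <= x2 ->
  exists y1 y2, feasible y1 y2 /\ ces rho x1 (c * x2) < ces rho y1 (c * y2).
Proof.
  intros Hr Hc [_ [_ Hsum]] [Hx1 Hx12].
  set (g := fun h => Rpower (x1 + 1 * h) rho + Rpower (c * x2 + - c * h) rho).
  set (l := rho * Rpower (x1 + 1 * 0) (rho - 1) * 1
            + rho * Rpower (c * x2 + - c * 0) (rho - 1) * - c).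
  assert (Hderiv : derivable_pt_lim g 0 l).
  { apply (derivable_pt_lim_plus (fun h => Rpower (x1 + 1 * h) rho)
                                 (fun h => Rpower (c * x2 + - c * h) rho));
      apply derivable_pt_lim_Rpower_affine; nra. }
  (* l = rho (x1^(rho-1) - c^rho x2^(rho-1)), with x1^(rho-1) >= x2^(rho-1). *)
  assert (Hl : l < 0).
  { assert (Hshare : c * Rpower (c * x2) (rho - 1) = Rpower c rho * Rpower x2 (rho - 1)).
    { rewrite <- Rpower_mult_distr by lra.
      rewrite <- (Rpower_1 c) at 1 by lra; rewrite <- Rmult_assoc, <- Rpower_plus.
      replace (1 + (rho - 1)) with rho by ring; reflexivity. }
    pose proof (Rpower_le_neg_exp x1 x2 (rho - 1) Hx1 Hx12 ltac:(lra)).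
    pose proof (Rpower_lt_1_neg_exp c rho Hc Hr).
    pose proof (Rpower_pos x2 (rho - 1)).
    assert (Hgap : 0 < Rpower x1 (rho - 1) - c * Rpower (c * x2) (rho - 1)) by nra.
    unfold l; replace (x1 + 1 * 0) with x1 by ring;
      replace (c * x2 + - c * 0) with (c * x2) by ring.
    nra. }
  destruct (descent_right g 0 l (x2 / 2) Hderiv Hl ltac:(lra)) as [h [[Hh Hhx2] Hdesc]].
  exists (x1 + h), (x2 - h); split; [unfold feasible; lra |].
  unfold g in Hdesc.
  replace (x1 + 1 * (0 + h)) with (x1 + h) in Hdesc by ring.
  replace (c * x2 + - c * (0 + h)) with (c * (x2 - h)) in Hdesc by ring.
  replace (x1 + 1 * 0) with x1 in Hdesc by ring.
  replace (c * x2 + - c * 0) with (c * x2) in Hdesc by ring.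
  apply ces_lt_of_power_sum; [lra | lra | nra | lra | nra | exact Hdesc].
Qed.

Theorem mainTheorem13 :
  forall rho : R, rho < 0 ->
  ~ (exists (p : R -> R) (x1 x2 : R),
        in_Psi (fun x => x) (fun x => 2 * x) rho x1 x2 /\
        walrasian (fun x => x) (fun x => 2 * x) p x1 x2).
Proof.
  intros rho Hr [p [x1 [x2 [Hpsi [D1 [D2 _]]]]]].
  (* The steeper agent 2 demands at least as much as agent 1. *)
  pose proof (demand_revealed_preference _ _ _ _ _ D1 D2) as Hx12; simpl in Hx12.
  destruct (in_Psi_positive_values (fun x => x) (fun x => 2 * x) rho x1 x2 (1 / 2) (1 / 2)
              ltac:(unfold feasible; lra) ltac:(simpl; lra) ltac:(simpl; lra) Hpsi)
    as [Hx1 _]; simpl in Hx1.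
  (* But then a transfer to agent 1 improves welfare, contradicting optimality. *)
  destruct Hpsi as [Hfeas Hopt].
  destruct (transfer_improves_welfare rho 2 x1 x2 Hr ltac:(lra) Hfeas ltac:(lra))
    as [y1 [y2 [Hy Hbetter]]].
  pose proof (Hopt y1 y2 Hy); simpl in *; lra.
Qed.
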